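(* Suppose the noisy label $\tilde Y$ does not have the same distribution as the clean label $Y$. Then there exists a score function $s$ such that $$\mathbb P\big(Y_{\rm test}\in\widehat{\mathcal C}_{\rm noisy}(X_{\rm test})\big)<\mathbb P\big(Y_{\rm test}\in\widehat{\mathcal C}(X_{\rm test})\big).$$ Here $\widehat{\mathcal C}_{\rm noisy}$ is built from the noisy calibration samples and $\widehat{\mathcal C}$ from the clean calibration samples, both with the same score $s$ and level $\alpha$.
   Context: Let $(X_i,Y_i)$, $i=1,\dots,n$, and $(X_{\rm test},Y_{\rm test})$ be i.i.d. Noisy labels $\tilde Y_i=g(Y_i,U_i)$ are produced by a random corruption function $g$ with independent seeds $U_i\sim\mathrm{Unif}[0,1]$. For a score $s:\mathcal X\times\mathcal Y\to\mathbb R$ and level $\alpha\in(0,1)$: - $\hat q_{\rm clean}$ is the $\lceil(n+1)(1-\alpha)\rceil$-th smallest of $s(X_i,Y_i)$, and $\widehat{\mathcal C}(x)=\{y:s(x,y)\le\hat q_{\rm clean}\}$. - $\hat q_{\rm noisy}$ is the $\lceil(n+1)(1-\alpha)\rceil$-th smallest of $s(X_i,\tilde Y_i)$, and $\widehat{\mathcal C}_{\rm noisy}(x)=\{y:s(x,y)\le\hat q_{\rm noisy}\}$. *)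

From HB Require Import structures.
From mathcomp Require Import all_boot all_order all_algebra.
From mathcomp Require Import all_classical all_reals all_analysis.
Set Implicit Arguments. Unset Strict Implicit. Unset Printing Implicit Defensive.
Import Order.TTheory GRing.Theory Num.Theory.
Local Open Scope classical_set_scope.
Local Open Scope ring_scope.

Definition preimage_family d d' (T : measurableType d) (V : measurableType d')
  (f : T -> V) : set (set T) :=
  [set E | exists B : set V, measurable B /\ E = f @^-1` B].

Definition mutually_independent d (T : measurableType d) (R : realType)
  (P : probability T R) (I : finType) (F : I -> set (set T)) : Prop :=
  forall A : I -> set T, (forall i, F i (A i)) ->
  forall J : {set I},
    P (\big[setI/setT]_(i in J) A i) = (\prod_(i in J) fine (P (A i)))%:E.

(* k-th smallest element (1-based) of a finite list of reals; +oo if it does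
   not exist (k = 0 or k > size) *)
Definition kth_smallest (R : realType) (k : nat) (v : seq R) : \bar R :=
  if (0 < k <= size v)%N then (nth 0 (sort <=%R v) k.-1)%:E else +oo%E.

Definition conf_rank (R : realType) (n : nat) (alpha : R) : int :=
  Num.ceil (n.+1%:R * (1 - alpha)).

Definition conf_quantile (R : realType) (n : nat) (alpha : R)
  (scores : 'I_n -> R) : \bar R :=
  kth_smallest `|conf_rank n alpha|%N [seq scores i | i <- enum 'I_n].

Definition conf_set (TX TY : Type) (R : realType) (s : TX -> TY -> R)
  (q : \bar R) (x : TX) : set TY := [set y | ((s x y)%:E <= q)%E].

(* Choose a measurable B whose probability drops under corruption, P(g(Y,U) in B) <
   P(Y in B) (if the law changes on some set, it drops on that set or on its complement),
   and use the score s(x, y) = 1_B(y).  With k = ceil((n+1)(1-alpha)), the test point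
   is missed exactly when Y_test lies in B while at least k calibration labels lie
   outside B.  By independence this has probability P(Y in B) * P(Bin(n, q) >= k), where
   q is the probability that a single calibration label lies outside B.  Corruption
   increases q, and the binomial tail is strictly increasing in q when 0 < k <= n, so
   the noisy prediction set misses strictly more often.  The product rule for events
   about the pairs (Y_i, U_i) follows from the assumed independence for rectangles and
   extends to arbitrary measurable sets by a pi-lambda argument, one coordinate at a
   time. *)

From HB Require Import structures.
From mathcomp Require Import all_boot all_order all_algebra.
From mathcomp Require Import all_classical all_reals all_analysis.
From mathcomp Require Import measurable_realfun.
From mathcomp Require Import ring lra zify.
Import Order.TTheory GRing.Theory Num.Theory.
Local Open Scope classical_set_scope.
Local Open Scope ring_scope.

Section binomial_tail.
Context {R : realType}.
Implicit Types p q : R.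

Definition binomial_tail n p k := \sum_(k <= j < n.+1) binomial_pmf n p j.

Lemma binomial_pmfE n p k :
  binomial_pmf n p k = p ^+ k * (1 - p) ^+ (n - k) *+ 'C(n, k).
Proof. by []. Qed.

Lemma binomial_pmfS n p j :
  binomial_pmf n.+1 p j.+1 = p * binomial_pmf n p j + (1 - p) * binomial_pmf n p j.+1.
Proof.
rewrite !binomial_pmfE binS mulrnDr subSS.
case: (ltnP j n) => hj.
  have -> : (n - j = (n - j.+1).+1)%N by rewrite subnS prednK // subn_gt0.
  rewrite !exprS; ring.
rewrite bin_small ?ltnS // mulr0n exprS; ring.
Qed.

Lemma binomial_pmf_small n p j : (n < j)%N -> binomial_pmf n p j = 0.
Proof. by move=> hj; rewrite binomial_pmfE bin_small. Qed.

Lemma binomial_tail_widen n p k N :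
  (n.+1 <= N)%N -> \sum_(k <= j < N) binomial_pmf n p j = binomial_tail n p k.
Proof.
move=> hN; rewrite /binomial_tail; case: (leqP k n.+1) => hk.
  rewrite (@big_cat_nat _ _ _ n.+1 k N) //= [X in _ + X]big1_seq ?addr0 //.
  by move=> j /andP[_]; rewrite mem_index_iota => /andP[hj _]; exact: binomial_pmf_small.
rewrite [RHS]big_geq ?(ltnW hk) // big1_seq // => j /andP[_].
rewrite mem_index_iota => /andP[hj _]; apply: binomial_pmf_small.
exact: leq_trans (ltnW hk) hj.
Qed.

Lemma binomial_tailS n p k :
  binomial_tail n.+1 p k.+1 = p * binomial_tail n p k + (1 - p) * binomial_tail n p k.+1.
Proof.
rewrite /binomial_tail big_add1 /=.
under eq_bigr => j _ do rewrite binomial_pmfS.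
rewrite big_split /= -!mulr_sumr; congr (_ + _ * _).
by rewrite -/(binomial_tail n p k.+1) -(binomial_tail_widen n p k.+1 n.+2) // big_add1.
Qed.

Lemma binomial_tail_split n p k :
  (k <= n)%N -> binomial_tail n p k = binomial_pmf n p k + binomial_tail n p k.+1.
Proof. by move=> hk; rewrite /binomial_tail big_ltn. Qed.

Lemma binomial_tail_small n p k : (n < k)%N -> binomial_tail n p k = 0.
Proof. by move=> hk; rewrite /binomial_tail big_geq. Qed.

Lemma binomial_tail0 n p : binomial_tail n p 0 = 1.
Proof.
elim: n => [|n IH]; first by rewrite /binomial_tail big_nat1 binomial_pmfE bin0 !expr0 mulr1.
have pmf0 m : binomial_pmf m.+1 p 0 = (1 - p) * binomial_pmf m p 0.
  by rewrite !binomial_pmfE !bin0 !subn0 exprS; ring.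
have := binomial_tail_split n p 0 (leq0n n); rewrite IH => split_n.
rewrite (binomial_tail_split n.+1 p 0) // binomial_tailS pmf0 IH.
rewrite (_ : binomial_tail n p 1 = 1 - binomial_pmf n p 0); [ring | lra].
Qed.

Lemma binomial_tail_ge0 n p k : 0 <= p <= 1 -> 0 <= binomial_tail n p k.
Proof. by move=> hp; apply: sumr_ge0 => j _; exact: binomial_pmf_ge0. Qed.

Lemma binomial_tail_nonincr n p k :
  0 <= p <= 1 -> binomial_tail n p k.+1 <= binomial_tail n p k.
Proof.
move=> hp; case: (leqP k n) => hk; last by rewrite !binomial_tail_small // ltnW.
by rewrite (binomial_tail_split _ _ _ hk) lerDr binomial_pmf_ge0.
Qed.

Lemma ler_binomial_tail n k p q :
  0 <= p -> p <= q -> q <= 1 -> binomial_tail n p k <= binomial_tail n q k.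
Proof.
move=> p0 pq q1.
have hp : 0 <= p <= 1 by rewrite p0 (le_trans pq q1).
elim: n k => [|n IH] [|k]; rewrite ?binomial_tail0 //.
  by rewrite !binomial_tail_small.
rewrite !binomial_tailS.
have := IH k; have := IH k.+1; have := binomial_tail_nonincr n p k hp.
have := binomial_tail_ge0 n p k.+1 hp; nra.
Qed.

(* Induction along [binomial_tailS]; strictness originates at k = 1, where
   [binomial_tail n p 1 = 1 - binomial_pmf n p 0] and [binomial_pmf n p 0 > 0] for p < 1. *)
Lemma ltr_binomial_tail n k p q : (0 < k <= n)%N ->
  0 <= p -> p < q -> q <= 1 -> binomial_tail n p k < binomial_tail n q k.
Proof.
move=> hk p0 pq q1.
have hp : 0 <= p <= 1 by rewrite p0 (le_trans (ltW pq) q1).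
elim: n k hk => [|n IH] [|k] //= hk.
rewrite !binomial_tailS.
have := ler_binomial_tail n k p q p0 (ltW pq) q1.
have := ler_binomial_tail n k.+1 p q p0 (ltW pq) q1.
have := binomial_tail_nonincr n p k hp.
case: k hk => [|k] hk.
  have := binomial_tail_split n p 0 (leq0n n); rewrite !binomial_tail0.
  have : 0 < binomial_pmf n p 0.
    rewrite binomial_pmfE bin0 subn0 mulr1n expr0 mul1r exprn_gt0 //.
    by rewrite subr_gt0 (lt_le_trans pq).
  nra.
have := IH k.+1 hk; have := binomial_tail_ge0 n p k.+1 hp.
have : 0 < q by exact: le_lt_trans pq.
nra.
Qed.

End binomial_tail.

Section zero_one_quantile.
Variable R : realType.

Lemma sorted_nseq01 (c0 c1 : nat) : sorted <=%R (nseq c0 (0 : R) ++ nseq c1 1).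
Proof.
elim: c0 => [|c0 IH] /=.
  by elim: c1 => [|[|c1] IH] //=; move: IH => /= ->; rewrite lexx.
case: c0 IH => [|c0] /= IH; last by rewrite IH lexx.
by case: c1 IH => [|c1] //= ->; rewrite ler01.
Qed.

Lemma sort_zero_one (v : seq R) : all (fun x => (x == 0) || (x == 1)) v ->
  sort <=%R v = nseq (count_mem (0%R : R) v) 0 ++ nseq (size v - count_mem (0%R : R) v) 1.
Proof.
move=> v01; apply: (sorted_eq le_trans le_anti).
- exact/sort_sorted/le_total.
- exact: sorted_nseq01.
have zeros : [seq x <- v | pred1 0 x] = nseq (count_mem (0%R : R) v) 0.
  by rewrite -size_filter; apply/all_pred1P; exact: filter_all.
have ones : [seq x <- v | predC (pred1 (0%R : R)) x] = nseq (size v - count_mem (0%R : R) v) 1.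
  rewrite -(count_predC (pred1 (0%R : R)) v) addKn -size_filter; apply/all_pred1P.
  apply/allP => x; rewrite mem_filter => /andP[/= x_neq0 xv].
  by move/allP: v01 => /(_ x xv) /orP[/eqP x0|//]; rewrite x0 eqxx in x_neq0.
by rewrite perm_sort -zeros -ones perm_sym perm_filterC.
Qed.

Lemma kth_smallest_zero_one (v : seq R) k :
  all (fun x => (x == 0) || (x == 1)) v -> (0 < k <= size v)%N ->
  kth_smallest k v = (if (k <= count_mem (0%R : R) v)%N then 0 else 1)%:E.
Proof.
move=> v01 hk; rewrite /kth_smallest hk sort_zero_one // nth_cat size_nseq.
case/andP: hk => k0 kv; rewrite -(prednK k0) in kv *.
case: ifP => hc; first by rewrite nth_nseq if_same.
rewrite nth_nseq ifT //; have := count_size (pred1 (0%R : R)) v; lia.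
Qed.

End zero_one_quantile.

Lemma count_enum_ord n (p : pred 'I_n) : count p (enum 'I_n) = #|[set i | p i]%SET|.
Proof.
by rewrite cardsE cardE /enum_mem size_filter (@eq_filter _ _ predT) // filter_predT.
Qed.

Definition indicator_score {R : realType} {TX TY : Type} (B : set TY) : TX -> TY -> R :=
  fun _ y => \1_B y.

Lemma indicator_le_conf_quantile {R : realType} {TY : Type} (B : set TY) n (alpha : R)
    (yv : 'I_n -> TY) (yt : TY) :
  (0 < `|conf_rank n alpha|%N <= n)%N ->
  (((\1_B yt : R)%:E <= conf_quantile alpha (fun i => \1_B (yv i)))%E <->
   ~ (B yt /\ (`|conf_rank n alpha|%N <= #|[set i | yv i \notin B]%SET|)%N)).
Proof.
move=> hk; rewrite /conf_quantile kth_smallest_zero_one; first last.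
- by rewrite size_map size_enum_ord.
- by apply/allP => _ /mapP[i _ ->]; rewrite indicE; case: (_ \in _); rewrite ?eqxx ?orbT.
rewrite count_map count_enum_ord.
have -> : [set i | preim (fun i => (\1_B (yv i) : R)) (pred1 0%R) i]%SET =
    [set i | yv i \notin B]%SET.
  by apply/setP => i; rewrite !inE /= indicE; case: (_ \in _); rewrite /= ?oner_eq0 ?eqxx.
rewrite indicE; case: (boolP (yt \in B)) => ytB; case: ifP => hc /=;
  rewrite lee_fin ?ler10 ?lexx ?ler01.
- by split=> // H; exfalso; apply: H; split=> //; exact: set_mem.
- by split=> // _ [_ hk']; rewrite hk' in hc.
- by split=> // _ [/mem_set]; rewrite (negPf ytB).
- by split=> // _ [/mem_set]; rewrite (negPf ytB).
Qed.

Lemma bigsetIP (I : choiceType) (U : Type) (r : seq I) (P : pred I) (F : I -> set U) u :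
  (\big[setI/setT]_(i <- r | P i) F i) u <-> (forall i, i \in r -> P i -> F i u).
Proof.
rewrite -bigcap_seq_cond; split=> [h i ir Pi|h i /andP[ir Pi]]; last exact: h.
by apply: h; rewrite /= ir.
Qed.

Lemma bigsetUP (I : choiceType) (U : Type) (r : seq I) (P : pred I) (F : I -> set U) u :
  (\big[setU/set0]_(i <- r | P i) F i) u <-> (exists i, [/\ i \in r, P i & F i u]).
Proof.
rewrite -bigcup_seq_cond; split=> [[i /andP[ir Pi] Fi]|[i [ir Pi Fi]]]; first by exists i.
by exists i; rewrite /= ?ir.
Qed.

Lemma big_option (R : Type) (idx : R) (op : Monoid.law idx) (I : finType)
    (F : option I -> R) :
  \big[op/idx]_(k : option I) F k = op (F None) (\big[op/idx]_(i : I) F (Some i)).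
Proof.
by rewrite ![index_enum _]unlock [@Finite.enum in LHS]unlock /= big_cons big_map.
Qed.

Lemma measure_bigsetU_seq d (T : measurableType d) (R : realType)
    (mu : {measure set T -> \bar R}) (I : choiceType) (r : seq I) (P : pred I)
    (F : I -> set T) :
  uniq r -> (forall i, measurable (F i)) ->
  (forall i j, i != j -> F i `&` F j = set0) ->
  mu (\big[setU/set0]_(i <- r | P i) F i) = (\sum_(i <- r | P i) mu (F i))%E.
Proof.
move=> + mF dF; elim: r => [|a r IH]; first by rewrite !big_nil measure0.
move=> /= /andP[ar ur]; rewrite !big_cons; case: ifP => Pa; last exact: IH.
rewrite measureU //; first by congr (_ + _)%E; exact: IH.
  by apply: bigsetU_measurable => i _; exact: mF.
apply/seteqP; split=> // w [Fa /bigsetUP[i [ir _ Fi]]].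
have ai : a != i by apply: contraNneq ar => ->.
by rewrite -(dF _ _ ai).
Qed.

(* The measurable rectangles form a pi-system generating the product sigma-algebra,
   so finite image measures agreeing on them agree everywhere. *)
Lemma pushforward_eq_setX d d1 d2 (T : measurableType d) (T1 : measurableType d1)
    (T2 : measurableType d2) (R : realType) (mu nu : {measure set T -> \bar R})
    (f g : T -> T1 * T2) :
  measurable_fun setT f -> measurable_fun setT g -> (mu setT < +oo)%E ->
  (forall A D, measurable A -> measurable D ->
     mu (f @^-1` (A `*` D)) = nu (g @^-1` (A `*` D))) ->
  forall C, measurable C -> mu (f @^-1` C) = nu (g @^-1` C).
Proof.
move=> mf mg mu_fin h.
(* the measure structure of an image measure depends on [mf], so it is not inferred *)
pose mf' : {measure set (T1 * T2) -> \bar R} :=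
  measure_function_pushforward__canonical__measure_function_Measure mu mf.
pose mg' : {measure set (T1 * T2) -> \bar R} :=
  measure_function_pushforward__canonical__measure_function_Measure nu mg.
move=> C mC; suff : mf' C = mg' C by [].
apply: (measure_unique [set A `*` B | A in measurable & B in measurable]
  (fun _ => setT)) => //.
- exact: measurable_prod_measurableType.
- move=> _ _ [A mA [B mB <-]] [A' mA' [B' mB' <-]].
  exists (A `&` A'); first exact: measurableI.
  by exists (B `&` B'); [exact: measurableI|rewrite setXI].
- by move=> _; exists setT => //; exists setT => //; rewrite setXTT.
- by apply/seteqP; split=> // x _; exists 0%N.
by move=> _ [A mA [B mB <-]]; exact: h.
Qed.

Lemma sum_subsets_card_geq (R : realType) (n k : nat) (p : R) :
  \sum_(S : {set 'I_n} | (k <= #|S|)%N) p ^+ #|S| * (1 - p) ^+ (n - #|S|) =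
  binomial_tail n p k.
Proof.
have hS (S : {set 'I_n}) : (#|S| < n.+1)%N.
  by rewrite ltnS; apply: leq_trans (max_card _) _; rewrite card_ord.
rewrite (partition_big (fun S => Ordinal (hS S)) (fun j : 'I_n.+1 => (k <= j)%N)) //=.
rewrite /binomial_tail big_geq_mkord /=; apply: eq_bigr => j hj.
rewrite (eq_bigl (fun S : {set 'I_n} => S \in [set S : {set 'I_n} | #|S| == j]%SET));
  last first.
  move=> S; rewrite inE; apply/andP/idP => [[_ /eqP <-]//|/eqP hSj].
  by split; [rewrite hSj | apply/eqP/val_inj].
rewrite (eq_bigr (fun _ => p ^+ j * (1 - p) ^+ (n - j))); last first.
  by move=> S; rewrite inE => /eqP ->.
by rewrite sumr_const card_draws card_ord binomial_pmfE.
Qed.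

Lemma measurable_preimage {d d'} {T : measurableType d} {V : measurableType d'}
    {f : T -> V} {C : set V} :
  measurable_fun setT f -> measurable C -> measurable (f @^-1` C).
Proof. by move=> mf mC; rewrite -[_ @^-1` _]setTI; exact: mf. Qed.

Section split_conformal_noise.
Context (R : realType) (d dX dY : measure_display)
  (T : measurableType d) (P : probability T R)
  (TX : measurableType dX) (TY : measurableType dY) (n : nat)
  (X : 'I_n -> T -> TX) (Y : 'I_n -> T -> TY)
  (Xt : T -> TX) (Yt : T -> TY) (U : 'I_n -> T -> R).
Hypotheses (hY : forall i, measurable_fun setT (Y i)) (hYt : measurable_fun setT Yt)
  (hU : forall i, measurable_fun setT (U i)).
Hypothesis hindep : mutually_independent P
  (fun k : option 'I_n + 'I_n => match k with
   | inl None => preimage_family (fun w => (Xt w, Yt w))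
   | inl (Some i) => preimage_family (fun w => (X i w, Y i w))
   | inr i => preimage_family (U i)
   end).

Definition pr (A : set T) : R := fine (P A).

Lemma prE A : measurable A -> P A = (pr A)%:E.
Proof. by move=> mA; rewrite /pr fineK // fin_num_measure. Qed.

Lemma pr_ge0 A : 0 <= pr A.
Proof. exact: fine_ge0. Qed.

Lemma pr_le1 A : measurable A -> pr A <= 1.
Proof. by move=> mA; have := probability_le1 P mA; rewrite (prE _ mA) lee_fin. Qed.

Lemma pr_setT : pr setT = 1.
Proof. by rewrite /pr probability_setT. Qed.

Lemma pr_setC A : measurable A -> pr (~` A) = 1 - pr A.
Proof. by move=> mA; rewrite /pr probability_setC // (prE _ mA). Qed.

Definition YU (i : 'I_n) (w : T) : TY * R := (Y i w, U i w).

Lemma measurable_YU i : measurable_fun setT (YU i).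
Proof. exact: measurable_fun_pair. Qed.

Lemma measurable_preimage_YU i {C : set (TY * R)} :
  measurable C -> measurable (YU i @^-1` C).
Proof. exact/measurable_preimage/measurable_YU. Qed.

Lemma preimage_pair_setTX {A B : Type} (f : T -> A) (h : T -> B) (C : set B) :
  (fun w => (f w, h w)) @^-1` (setT `*` C) = h @^-1` C.
Proof. by apply/seteqP; split=> w /=; [case|]. Qed.

Lemma pr_test_calib_setX (Ct : set TY) (A : 'I_n -> set TY) (D : 'I_n -> set R) :
  measurable Ct -> (forall i, measurable (A i)) -> (forall i, measurable (D i)) ->
  P (Yt @^-1` Ct `&` \big[setI/setT]_i (Y i @^-1` A i `&` U i @^-1` D i)) =
  (pr (Yt @^-1` Ct) * \prod_i (pr (Y i @^-1` A i) * pr (U i @^-1` D i)))%:E.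
Proof.
move=> mCt mA mD.
pose Af (k : option 'I_n + 'I_n) : set T := match k with
  | inl None => (fun w => (Xt w, Yt w)) @^-1` (setT `*` Ct)
  | inl (Some i) => (fun w => (X i w, Y i w)) @^-1` (setT `*` A i)
  | inr i => U i @^-1` D i end.
have prod_rule : P (\big[setI/setT]_(k in [set: option 'I_n + 'I_n]%SET) Af k) =
    (\prod_(k in [set: option 'I_n + 'I_n]%SET) pr (Af k))%:E.
  apply: hindep => -[[i|]|i] /=.
  - by exists (setT `*` A i); split=> //; exact: measurableX.
  - by exists (setT `*` Ct); split=> //; exact: measurableX.
  - by exists (D i).
have -> : Yt @^-1` Ct `&` \big[setI/setT]_i (Y i @^-1` A i `&` U i @^-1` D i) =
    \big[setI/setT]_(k in [set: option 'I_n + 'I_n]%SET) Af k.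
  apply/seteqP; split=> w.
    move=> [Ctw /bigsetIP ADw]; apply/bigsetIP => -[[i|]|i] _ _ //=.
    - by have [] := ADw i (mem_index_enum _) erefl.
    - by have [] := ADw i (mem_index_enum _) erefl.
  move=> /bigsetIP Afw; split.
    by have [] := Afw (inl None) (mem_index_enum _) (finset.in_setT _).
  apply/bigsetIP => i _ _; split.
    by have [] := Afw (inl (Some i)) (mem_index_enum _) (finset.in_setT _).
  exact: Afw (inr i) (mem_index_enum _) (finset.in_setT _).
rewrite prod_rule; congr (_%:E).
rewrite (eq_bigl (fun _ => true)); last by move=> k; rewrite finset.in_setT.
rewrite big_sumType /= big_option /= !preimage_pair_setTX -mulrA -big_split /=.
by congr (_ * _); apply: eq_bigr => i _; rewrite preimage_pair_setTX.
Qed.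

Lemma pr_YU_setX i (A : set TY) (D : set R) : measurable A -> measurable D ->
  pr (YU i @^-1` (A `*` D)) = pr (Y i @^-1` A) * pr (U i @^-1` D).
Proof.
move=> mA mD.
pose Ai j := if j == i then A else setT; pose Di j := if j == i then D else setT.
have mAi j : measurable (Ai j) by rewrite /Ai; case: ifP.
have mDi j : measurable (Di j) by rewrite /Di; case: ifP.
have := @pr_test_calib_setX setT Ai Di measurableT mAi mDi.
have -> : Yt @^-1` setT `&` \big[setI/setT]_j (Y j @^-1` Ai j `&` U j @^-1` Di j) =
    YU i @^-1` (A `*` D).
  apply/seteqP; split=> w.
    by move=> [_ /bigsetIP /(_ i (mem_index_enum _) erefl)]; rewrite /Ai /Di eqxx.
  move=> [Aw Dw]; split=> //; apply/bigsetIP => j _ _.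
  by rewrite /Ai /Di; case: ifP => [/eqP ->|].
move=> h; rewrite /pr h -/(pr _) preimage_setT pr_setT mul1r.
rewrite (bigD1 i) //= /Ai /Di eqxx big1 ?mulr1 //.
by move=> j /negPf ->; rewrite !preimage_setT pr_setT mulr1.
Qed.

Definition product_rule (Ct : set TY) (E : 'I_n -> set (TY * R)) : Prop :=
  P (Yt @^-1` Ct `&` \big[setI/setT]_i (YU i @^-1` E i)) =
  (pr (Yt @^-1` Ct) * \prod_i pr (YU i @^-1` E i))%:E.

Lemma product_rule_setX Ct (A : 'I_n -> set TY) (D : 'I_n -> set R) :
  measurable Ct -> (forall i, measurable (A i)) -> (forall i, measurable (D i)) ->
  product_rule Ct (fun i => A i `*` D i).
Proof.
move=> mCt mA mD; rewrite /product_rule pr_test_calib_setX //.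
by congr (_ * _)%:E; apply: eq_bigr => i _; rewrite pr_YU_setX.
Qed.

(* [C |-> P(YU j in C, F)] and [C |-> c * P(YU j in C)] are finite image measures that
   agree on rectangles, hence on all measurable C. *)
Lemma product_rule_extend Ct E j :
  measurable Ct -> (forall i, measurable (E i)) ->
  (forall A D, measurable A -> measurable D ->
     product_rule Ct (fun i => if i == j then A `*` D else E i)) ->
  product_rule Ct E.
Proof.
move=> mCt mE rect_j.
pose F := Yt @^-1` Ct `&` \big[setI/setT]_(i | i != j) YU i @^-1` E i.
have mF : measurable F.
  apply: measurableI; first exact: measurable_preimage.
  by apply: bigsetI_measurable => i _; exact: measurable_preimage_YU.
pose c := pr (Yt @^-1` Ct) * \prod_(i | i != j) pr (YU i @^-1` E i).
have c_ge0 : 0 <= c by rewrite mulr_ge0 ?pr_ge0 // prodr_ge0 // => i _; exact: pr_ge0.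
have split_rule G : (forall i, i != j -> G i = E i) -> product_rule Ct G <->
    P (YU j @^-1` G j `&` F) = (c * pr (YU j @^-1` G j))%:E.
  move=> GE; rewrite /product_rule (bigD1 j) //= [X in pr _ * X](bigD1 j) //=.
  rewrite (eq_bigr (fun i => YU i @^-1` E i)); last by move=> i ij; rewrite GE.
  rewrite (eq_bigr (fun i => pr (YU i @^-1` E i))); last by move=> i ij; rewrite GE.
  rewrite mulrCA setIA [Yt @^-1` Ct `&` _]setIC -setIA.
  by split=> ->; rewrite mulrC.
apply/split_rule => //.
have image_eq C : measurable C -> P (YU j @^-1` C `&` F) = (c%:E * P (YU j @^-1` C))%E.
  apply: (@pushforward_eq_setX _ _ _ _ _ _ _ (mrestr P mF) (mscale (NngNum c_ge0) P)
    _ _ (measurable_YU j) (measurable_YU j)).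
    rewrite /mrestr /=; apply: (le_lt_trans (probability_le1 _ _)); last exact: ltry.
    exact: measurableI.
  move=> A D mA mD; rewrite /= /mrestr /mscale /=.
  rewrite (prE _ (measurable_preimage_YU _ (measurableX mA mD))).
  have GE i : i != j -> (if i == j then A `*` D else E i) = E i by move=> /negPf ->.
  by have := (split_rule _ GE).1 (rect_j A D mA mD); rewrite eqxx.
by rewrite image_eq // (prE _ (measurable_preimage_YU _ (mE j))).
Qed.

(* Induction on the number of coordinates that are not yet known to be rectangles. *)
Lemma product_rule_measurable Ct E :
  measurable Ct -> (forall i, measurable (E i)) -> product_rule Ct E.
Proof.
move=> mCt; suff rule_from m : forall E, (forall i, measurable (E i)) ->
    (forall i : 'I_n, (m <= i)%N -> exists AD : set TY * set R,
       [/\ measurable AD.1, measurable AD.2 & E i = AD.1 `*` AD.2]) ->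
    product_rule Ct E.
  by move=> mE; apply: (rule_from n) => // i; rewrite leqNgt ltn_ord.
elim: m => [|m IH] {}E mE rectE.
  have [AD hAD] := choice (fun i => rectE i (leq0n i)).
  have -> : E = fun i => (AD i).1 `*` (AD i).2.
    by apply/funext => i; have [_ _ ->] := hAD i.
  by apply: product_rule_setX => // i; have [] := hAD i.
have [m_lt_n|n_le_m] := ltnP m n; last first.
  by apply: IH => // i m_le_i; move: (ltn_ord i); rewrite ltnNge (leq_trans n_le_m).
apply: (@product_rule_extend _ _ (Ordinal m_lt_n)) => // A D mA mD.
apply: IH => [i|i m_le_i]; first by case: ifP => // _; exact: measurableX.
case: ifP => [_|/negbT i_neq_m]; first by exists (A, D).
apply: rectE; rewrite ltn_neqAle m_le_i andbT.
by apply: contra i_neq_m => /eqP m_eq_i; apply/eqP/val_inj.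
Qed.

Hypothesis hid : forall i B, measurable B ->
  P ((fun w => (X i w, Y i w)) @^-1` B) = P ((fun w => (Xt w, Yt w)) @^-1` B).
Hypothesis hunif : forall i B, measurable B ->
  P (U i @^-1` B) = lebesgue_measure (B `&` [set x : R | 0 <= x <= 1]).

Lemma pr_Y_test i A : measurable A -> pr (Y i @^-1` A) = pr (Yt @^-1` A).
Proof.
move=> mA; rewrite /pr -(preimage_pair_setTX (X i)) hid ?preimage_pair_setTX //.
exact: measurableX.
Qed.

Lemma pr_YU_ident i j C : measurable C -> pr (YU i @^-1` C) = pr (YU j @^-1` C).
Proof.
move=> mC; rewrite /pr (@pushforward_eq_setX _ _ _ _ _ _ _ P P _ _
  (measurable_YU i) (measurable_YU j)) //.
  by apply: (le_lt_trans (probability_le1 _ measurableT)); exact: ltry.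
move=> A D mA mD /=.
rewrite !(prE _ (measurable_preimage_YU _ (measurableX mA mD))) !pr_YU_setX //.
by rewrite !pr_Y_test // /pr !hunif.
Qed.

Definition n_outside (C : set (TY * R)) (w : T) : nat :=
  #|[set i : 'I_n | YU i w \notin C]%SET|.

Definition outside_exactly (C : set (TY * R)) (S : {set 'I_n}) : set T :=
  \big[setI/setT]_i (YU i @^-1` (if i \in S then ~` C else C)).

Lemma outside_exactlyP C S w :
  outside_exactly C S w <-> S = [set i : 'I_n | YU i w \notin C]%SET.
Proof.
split=> [/bigsetIP hS|->].
  apply/setP => i; rewrite inE; have := hS i (mem_index_enum _) erefl.
  rewrite /preimage /=; case: ifP => _ h; apply/esym.
    by apply/negP => /set_mem.
  exact/negPn/mem_set.
apply/bigsetIP => i _ _; rewrite /preimage /= inE.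
case: (boolP (YU i w \in C)) => /= h; first exact: set_mem.
by move=> /mem_set; rewrite (negPf h).
Qed.

Lemma measurable_outside_exactly C S : measurable C -> measurable (outside_exactly C S).
Proof.
move=> mC; apply: bigsetI_measurable => i _; apply: measurable_preimage_YU.
by case: (i \in S) => //; exact: measurableC.
Qed.

Lemma test_n_outside_geq_bigsetU Ct C k :
  Yt @^-1` Ct `&` [set w | (k <= n_outside C w)%N] =
  \big[setU/set0]_(S <- index_enum {set 'I_n} | (k <= #|S|)%N)
    (Yt @^-1` Ct `&` outside_exactly C S).
Proof.
apply/seteqP; split=> w.
  move=> [Ctw kw]; apply/bigsetUP; exists [set i : 'I_n | YU i w \notin C]%SET.
  by split=> //; [exact: mem_index_enum | split=> //; exact/outside_exactlyP].
move=> /bigsetUP[S [_ kS [Ctw /outside_exactlyP Sw]]].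
by split=> //; rewrite /= /n_outside -Sw.
Qed.

Lemma pr_test_outside_exactly Ct C S i0 : measurable Ct -> measurable C ->
  P (Yt @^-1` Ct `&` outside_exactly C S) =
  (pr (Yt @^-1` Ct) * ((1 - pr (YU i0 @^-1` C)) ^+ #|S| *
     (1 - (1 - pr (YU i0 @^-1` C))) ^+ (n - #|S|)))%:E.
Proof.
move=> mCt mC; rewrite [LHS]product_rule_measurable //; last first.
  by move=> i; case: (i \in S) => //; exact: measurableC.
congr (_ * _)%:E; rewrite (bigID (mem S)) /=; congr (_ * _).
  rewrite (eq_bigr (fun _ => 1 - pr (YU i0 @^-1` C))) ?prodr_const // => i ->.
  by rewrite preimage_setC pr_setC ?(pr_YU_ident i i0) //; exact: measurable_preimage_YU.
rewrite (eq_bigr (fun _ => 1 - (1 - pr (YU i0 @^-1` C)))) ?prodr_const; last first.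
  by move=> i /negPf ->; rewrite (pr_YU_ident i i0) // subKr.
have cardS : (#|S| + #|~: S| = n)%N by rewrite cardsC card_ord.
have -> : #|(fun i : 'I_n => i \notin S)| = #|~: S| by apply: eq_card => i; rewrite inE.
congr (_ ^+ _); apply/eqP; rewrite -(eqn_add2l #|S|) cardS subnKC //.
by apply: leq_trans (max_card _) _; rewrite card_ord.
Qed.

Lemma pr_test_n_outside_geq Ct C k i0 : measurable Ct -> measurable C ->
  P (Yt @^-1` Ct `&` [set w | (k <= n_outside C w)%N]) =
  (pr (Yt @^-1` Ct) * binomial_tail n (1 - pr (YU i0 @^-1` C)) k)%:E.
Proof.
move=> mCt mC; rewrite test_n_outside_geq_bigsetU measure_bigsetU_seq //; first last.
- move=> S S' SS'; apply/seteqP; split=> // w.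
  move=> [[_ /outside_exactlyP Sw] [_ /outside_exactlyP S'w]].
  by move: SS'; rewrite Sw S'w eqxx.
- move=> S; apply: measurableI; first exact: measurable_preimage.
  exact: measurable_outside_exactly.
- exact: index_enum_uniq.
set q := 1 - pr (YU i0 @^-1` C).
rewrite (eq_bigr (fun S : {set 'I_n} =>
    (pr (Yt @^-1` Ct) * (q ^+ #|S| * (1 - q) ^+ (n - #|S|)))%:E)); last first.
  by move=> S _; exact: pr_test_outside_exactly.
by rewrite sumEFin -mulr_sumr sum_subsets_card_geq.
Qed.

Variable alpha : R.
Hypotheses (halpha : alpha < 1) (hrank : conf_rank n alpha <= n%:Z).

Local Notation k := `|conf_rank n alpha|%N.

Lemma conf_rank_bounds : (0 < k <= n)%N.
Proof.
have rank_gt0 : 0 < conf_rank n alpha by rewrite /conf_rank ceil_gt0 mulr_gt0 // subr_gt0.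
apply/andP; split; first by rewrite absz_gt0 gt_eqF.
by rewrite -lez_nat gez0_abs //; exact: ltW.
Qed.

Lemma indicator_coverageE (B : set TY) (yv : 'I_n -> T -> TY) (C : set (TY * R)) :
  (forall i w, B (yv i w) <-> C (YU i w)) ->
  [set w | conf_set (indicator_score B)
     (conf_quantile alpha (fun i => indicator_score B (X i w) (yv i w))) (Xt w) (Yt w)] =
  ~` (Yt @^-1` B `&` [set w | (k <= n_outside C w)%N]).
Proof.
move=> BC; rewrite predeqE => w.
have same_out : [set i | yv i w \notin B]%SET = [set i | YU i w \notin C]%SET.
  apply/setP => i; rewrite !inE; congr negb.
  by apply/idP/idP => /set_mem/(BC i w)/mem_set.
rewrite /= /conf_set /indicator_score /=.
by rewrite (indicator_le_conf_quantile _ _ _ _ _ conf_rank_bounds) same_out.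
Qed.

Lemma pr_indicator_coverage (B : set TY) (yv : 'I_n -> T -> TY) (C : set (TY * R)) i0 :
  measurable B -> measurable C -> (forall i w, B (yv i w) <-> C (YU i w)) ->
  P [set w | conf_set (indicator_score B)
     (conf_quantile alpha (fun i => indicator_score B (X i w) (yv i w))) (Xt w) (Yt w)] =
  (1 - pr (Yt @^-1` B) * binomial_tail n (1 - pr (YU i0 @^-1` C)) k)%:E.
Proof.
move=> mB mC BC; rewrite (indicator_coverageE _ _ _ BC) probability_setC; last first.
  rewrite test_n_outside_geq_bigsetU; apply: bigsetU_measurable => S _.
  by apply: measurableI; [exact: measurable_preimage | exact: measurable_outside_exactly].
by rewrite (pr_test_n_outside_geq _ _ _ i0).
Qed.

Variable g : TY -> R -> TY.
Hypotheses (hg : measurable_fun setT (fun p : TY * R => g p.1 p.2))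
  (hnoise : exists i : 'I_n, exists B : set TY, measurable B /\
     P ((fun w => g (Y i w) (U i w)) @^-1` B) <> P (Y i @^-1` B)).

Definition noisy_preimage (B : set TY) : set (TY * R) := (fun p => g p.1 p.2) @^-1` B.

Lemma measurable_noisy_preimage {B : set TY} :
  measurable B -> measurable (noisy_preimage B).
Proof. exact: measurable_preimage. Qed.

(* If corruption moves mass out of some B, it moves mass into its complement. *)
Lemma exists_noisy_lt :
  exists i0, exists2 B, measurable B & pr (YU i0 @^-1` noisy_preimage B) < pr (Yt @^-1` B).
Proof.
have [i0 [B [mB noisy_neq]]] := hnoise; exists i0.
have mN := measurable_preimage_YU i0 (measurable_noisy_preimage mB).
have : pr (YU i0 @^-1` noisy_preimage B) != pr (Yt @^-1` B).
  apply: contra_notN noisy_neq => /eqP noisy_eq.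
  by rewrite (prE _ mN) (prE _ (measurable_preimage (hY i0) mB)) pr_Y_test // noisy_eq.
case: ltgtP => // [lt _|gt _]; first by exists B.
exists (~` B); first exact: measurableC.
rewrite -preimage_setC pr_setC // preimage_setC pr_setC ?ltrD2l ?ltrN2 //.
exact: measurable_preimage.
Qed.

Lemma noisy_calibration_undercovers : exists s : TX -> TY -> R,
  measurable_fun setT (fun p : TX * TY => s p.1 p.2) /\
  (P [set w | conf_set s
        (conf_quantile alpha (fun i => s (X i w) (g (Y i w) (U i w)))) (Xt w) (Yt w)]
   < P [set w | conf_set s
        (conf_quantile alpha (fun i => s (X i w) (Y i w))) (Xt w) (Yt w)])%E.
Proof.
have [i0 [B mB lt_B]] := exists_noisy_lt.
exists (indicator_score B); split.
  apply: (measurableT_comp (f := \1_B : TY -> R) (g := snd)) => //; exact: measurable_indic.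
rewrite (@pr_indicator_coverage B (fun i w => g (Y i w) (U i w)) (noisy_preimage B) i0) //;
  last exact: measurable_noisy_preimage.
rewrite (@pr_indicator_coverage B Y (B `*` setT) i0) //; last 2 first.
- exact: measurableX.
- by move=> i w; split=> [|[]].
rewrite pr_YU_setX // preimage_setT pr_setT mulr1 pr_Y_test //.
have B_pos : 0 < pr (Yt @^-1` B) by exact: le_lt_trans (pr_ge0 _) lt_B.
rewrite lte_fin ltrD2l ltrN2 (ltr_pM2l B_pos).
apply: ltr_binomial_tail; first exact: conf_rank_bounds.
- by rewrite subr_ge0 pr_le1 //; exact: measurable_preimage.
- by rewrite ltrD2l ltrN2.
- by rewrite lerBlDr lerDl pr_ge0.
Qed.

End split_conformal_noise.

Theorem mainTheorem6
  (R : realType) (d dX dY : measure_display)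
  (T : measurableType d) (P : probability T R)
  (TX : measurableType dX) (TY : measurableType dY)
  (n : nat) (alpha : R)
  (X : 'I_n -> T -> TX) (Y : 'I_n -> T -> TY)   (* calibration data *)
  (Xt : T -> TX) (Yt : T -> TY)                 (* test point *)
  (U : 'I_n -> T -> R)                          (* corruption seeds *)
  (g : TY -> R -> TY)                           (* corruption function *)
  (halpha : 0 < alpha < 1)
  (hrank : conf_rank n alpha <= n%:Z)
  (hX : forall i, measurable_fun setT (X i))
  (hY : forall i, measurable_fun setT (Y i))
  (hXt : measurable_fun setT Xt) (hYt : measurable_fun setT Yt)
  (hU : forall i, measurable_fun setT (U i))
  (hg : measurable_fun setT (fun p : TY * R => g p.1 p.2))
  (hid : forall i B, measurable B ->
     P ((fun w => (X i w, Y i w)) @^-1` B) = P ((fun w => (Xt w, Yt w)) @^-1` B))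
  (hunif : forall i B, measurable B ->
     P (U i @^-1` B) = lebesgue_measure (B `&` [set x : R | 0 <= x <= 1]))
  (hindep : mutually_independent P
     (fun k : option 'I_n + 'I_n => match k with
      | inl None => preimage_family (fun w => (Xt w, Yt w))
      | inl (Some i) => preimage_family (fun w => (X i w, Y i w))
      | inr i => preimage_family (U i)
      end))
  (hnoise : exists i : 'I_n, exists B : set TY, measurable B /\
     P ((fun w => g (Y i w) (U i w)) @^-1` B) <> P (Y i @^-1` B)) :
  exists s : TX -> TY -> R,
    measurable_fun setT (fun p : TX * TY => s p.1 p.2) /\
    (P [set w | conf_set s
          (conf_quantile alpha (fun i => s (X i w) (g (Y i w) (U i w)))) (Xt w) (Yt w)]
     < P [set w | conf_set s
          (conf_quantile alpha (fun i => s (X i w) (Y i w))) (Xt w) (Yt w)])%E.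
Proof. by apply: noisy_calibration_undercovers => //; case/andP: halpha. Qed.
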